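(* $\lim_{L\to\infty}Y_L(0)=-1/2$, where $Y_L(t)=\dfrac{\partial y_L(t)/\partial L}{y_L(t)}$.
   Context: For $\alpha\in(0,1/\sqrt2)$ let $L_\alpha=\pi/\mathrm{AGM}(\alpha,\tfrac12\sqrt{1+2\alpha^2})$; $\alpha\mapsto L_\alpha$ is a decreasing bijection from $(0,1/\sqrt2)$ onto $(\pi\sqrt2,\infty)$. For $L>\pi\sqrt2$ let $\alpha$ satisfy $L_\alpha=L$ and let $x_0>y_0>0$ satisfy $x_0^2+y_0^2=1$, $x_0y_0=\alpha^2$. Let $(x_L,y_L,z_L)(t)$ solve $x'=-xz$, $y'=yz$, $z'=x^2-y^2$ ($'=d/dt$) with initial value $(x_0,y_0,0)$. *)

From Stdlib Require Import Reals.
From Coquelicot Require Import Coquelicot.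
Open Scope R_scope.

Fixpoint agm_seq (a b : R) (n : nat) : R * R :=
  match n with
  | O => (a, b)
  | S n' => let p := agm_seq a b n' in ((fst p + snd p) / 2, sqrt (fst p * snd p))
  end.

Definition AGM (a b : R) : R := real (Lim_seq (fun n => fst (agm_seq a b n))).

Definition L_alpha (alpha : R) : R := PI / AGM alpha (sqrt (1 + 2 * alpha ^ 2) / 2).

(* Gauss: I(a,b) = int_0^(PI/2) dt / sqrt (a^2 cos^2 t + b^2 sin^2 t) is unchanged by the AGM step
   (a,b) |-> ((a+b)/2, sqrt (a b)) and lies between PI/(2 max(a,b)) and PI/(2 min(a,b)); hence
   AGM(a,b) = PI / (2 I(a,b)) and L_alpha = 2 I(alpha, b_alpha) with b_alpha^2 = (1 + 2 alpha^2)/4.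
   Differentiating under the integral sign, -alpha L'(alpha) = 4 / sqrt (1 + 2 alpha^2) + O(alpha),
   so alpha |-> L_alpha is decreasing near 0 and its inverse alpha(L) tends to 0 as L -> oo.
   The constraints on (x_0, y_0) force y_L(0)^2 = (1 - sqrt (1 - 4 alpha^4)) / 2, whence
   alpha y'/y = 1 + 1 / sqrt (1 - 4 alpha^4) -> 2, and by the chain rule
   Y_L(0) = (alpha y'/y) / (alpha L'(alpha)) -> 2 / (-4) = -1/2. *)

From Stdlib Require Import Reals Lra Psatz ClassicalEpsilon Ranalysis5.
From Coquelicot Require Import Coquelicot.
Open Scope R_scope.

Lemma RInt_between_const (f : R -> R) (a b c1 c2 : R) :
  a <= b -> ex_RInt f a b -> (forall x, a < x < b -> c1 <= f x <= c2) ->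
  c1 * (b - a) <= RInt f a b <= c2 * (b - a).
Proof.
  intros Hab Hf Hc.
  assert (Hconst : forall c, RInt (fun _ => c) a b = c * (b - a)).
  { intros c. rewrite RInt_const. unfold scal; simpl; unfold mult; simpl. ring. }
  rewrite <- !Hconst.
  split; apply RInt_le; auto using ex_RInt_const; intros x Hx; apply Hc, Hx.
Qed.

Lemma continuity_pt_ex_derive (f : R -> R) (x : R) : ex_derive f x -> continuity_pt f x.
Proof.
  intros Hf. apply continuity_pt_filterlim.
  apply (ex_derive_continuous (V := R_NormedModule)), Hf.
Qed.

Lemma eq_0_of_abs_le_eps (x C e0 : R) : 0 < e0 ->
  (forall eps, 0 < eps < e0 -> Rabs x <= C * eps) -> x = 0.
Proof.
  intros He0 Hx. destruct (Req_dec x 0) as [|Hneq]; auto. exfalso.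
  assert (Hax : 0 < Rabs x) by (apply Rabs_pos_lt, Hneq).
  set (eps := Rmin (e0 / 2) (Rabs x / (2 * (Rabs C + 1)))).
  assert (Heps0 : 0 < eps) by (apply Rmin_pos; apply Rdiv_lt_0_compat; pose proof (Rabs_pos C); lra).
  assert (Heps1 : eps <= e0 / 2) by apply Rmin_l.
  assert (Heps2 : eps * (2 * (Rabs C + 1)) <= Rabs x).
  { pose proof (Rabs_pos C).
    apply (Rmult_le_reg_r (/ (2 * (Rabs C + 1)))); [apply Rinv_0_lt_compat; lra|].
    rewrite Rmult_assoc, Rinv_r, Rmult_1_r by lra. apply Rmin_r. }
  pose proof (Hx eps ltac:(lra)). pose proof (Rle_abs C). nra.
Qed.

Lemma pow2_div_sqrt (x w : R) : 0 < w -> (x / sqrt w) ^ 2 = x ^ 2 / w.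
Proof. intros Hw. unfold Rdiv. rewrite Rpow_mult_distr, pow_inv, pow2_sqrt by lra. reflexivity. Qed.

Lemma is_derive_inv_sqrt (f : R -> R) (x df : R) : is_derive f x df -> 0 < f x ->
  is_derive (fun u => / sqrt (f u)) x (- df / (2 * f x * sqrt (f x))).
Proof.
  intros Hf Hpos. pose proof (sqrt_lt_R0 _ Hpos). pose proof (sqrt_sqrt _ (Rlt_le _ _ Hpos)) as Hsq.
  assert (Hout : is_derive (fun e => / sqrt e) (f x) (- / (2 * f x * sqrt (f x)))).
  { auto_derive; [repeat split; lra|].
    replace (2 * f x * sqrt (f x)) with (2 * (sqrt (f x) * sqrt (f x)) * sqrt (f x)) by (rewrite Hsq; ring).
    field. lra. }
  replace (- df / (2 * f x * sqrt (f x))) with (scal df (- / (2 * f x * sqrt (f x))))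
    by (unfold scal; simpl; unfold mult; simpl; field; lra).
  exact (is_derive_comp (fun e => / sqrt e) f x _ _ Hout Hf).
Qed.

Lemma continuity_2d_pt_fst_comp (f : R -> R) (x y : R) :
  ex_derive f x -> continuity_2d_pt (fun u _ => f u) x y.
Proof.
  intros Hf. apply (continuity_1d_2d_pt_comp f (fun u _ => u)).
  - apply continuity_pt_ex_derive, Hf.
  - apply continuity_2d_pt_id1.
Qed.

Lemma continuity_2d_pt_snd_comp (f : R -> R) (x y : R) :
  ex_derive f y -> continuity_2d_pt (fun _ v => f v) x y.
Proof.
  intros Hf. apply (continuity_1d_2d_pt_comp f (fun _ v => v)).
  - apply continuity_pt_ex_derive, Hf.
  - apply continuity_2d_pt_id2.
Qed.

Lemma continuous_of_continuity_2d_pt (f : R -> R -> R) (x y : R) :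
  continuity_2d_pt f x y -> continuous (f x) y.
Proof.
  intros Hf. apply continuity_pt_filterlim. intros eps Heps.
  destruct (Hf (mkposreal eps Heps)) as [d Hd].
  exists d. split; [apply cond_pos|]. intros v [_ Hv].
  apply Hd; [rewrite Rminus_eq_0, Rabs_R0; apply cond_pos | exact Hv].
Qed.

Section DecreasingInverse.

Variables (F dF : R -> R) (b c : R).
Hypothesis Hc : 0 < c < b.
Hypothesis F_deriv : forall x, 0 < x < b -> is_derive F x (dF x).
Hypothesis dF_neg : forall x, 0 < x < b -> dF x < 0.
Hypothesis F_unbounded : forall M, exists x, 0 < x < b /\ M < F x.

Lemma deriv_neg_decr x y : 0 < x -> x < y -> y < b -> F y < F x.
Proof.
  intros Hx Hxy Hy. enough (- F x < - F y) by lra.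
  apply (incr_function (fun u => - F u) 0 b (fun u => - dF u)); simpl; auto.
  - intros u Hu0 Hub. apply (is_derive_opp F u (dF u)), F_deriv. lra.
  - intros u Hu0 Hub. pose proof (dF_neg u ltac:(lra)). lra.
Qed.

Lemma deriv_neg_lt_rev x y : 0 < x < b -> 0 < y < b -> F x < F y -> y < x.
Proof.
  intros Hx Hy HF. destruct (Rlt_le_dec y x) as [|Hyx]; auto.
  destruct Hyx as [Hyx | ->]; [pose proof (deriv_neg_decr x y ltac:(lra) Hyx ltac:(lra))|]; lra.
Qed.

(* Arbitrary (and unused) when [L <= F c]. *)
Definition decr_inv (L : R) := epsilon (inhabits 0) (fun x => 0 < x < c /\ F x = L).

Lemma decr_inv_spec L : F c < L -> 0 < decr_inv L < c /\ F (decr_inv L) = L.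
Proof.
  intros HL. apply (epsilon_spec (inhabits 0) (fun x => 0 < x < c /\ F x = L)).
  destruct (F_unbounded L) as (x1 & Hx1 & HLx1).
  assert (Hx1c : x1 < c) by (apply (deriv_neg_lt_rev c x1); lra).
  destruct (IVT_interv (fun x => L - F x) x1 c) as (x & Hx & HFx).
  - intros x Hx. apply continuity_pt_minus; [apply continuity_pt_const; intros ? ?; reflexivity|].
    apply continuity_pt_ex_derive. eexists. apply F_deriv. lra.
  - exact Hx1c.
  - simpl. lra.
  - simpl. lra.
  - exists x. simpl in HFx. assert (x <> c) by (intros ->; lra). split; [split|]; lra.
Qed.

Lemma decr_inv_lt L d : 0 < d <= c -> F c < L -> F d < L -> decr_inv L < d.
Proof.
  intros Hd HcL HdL. destruct (decr_inv_spec L HcL) as [Hinv HF].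
  apply (deriv_neg_lt_rev d); lra.
Qed.

Lemma decr_inv_antitone L1 L2 : F c < L1 -> L1 <= L2 -> decr_inv L2 <= decr_inv L1.
Proof.
  intros HL1 HL12. destruct (decr_inv_spec L1 HL1) as [H1 HF1].
  destruct (decr_inv_spec L2 ltac:(lra)) as [H2 HF2].
  destruct HL12 as [HL12 | <-]; [apply Rlt_le, (deriv_neg_lt_rev (decr_inv L1)); lra | lra].
Qed.

Lemma continuity_pt_decr_inv L : F c < L -> continuity_pt decr_inv L.
Proof.
  intros HL. destruct (decr_inv_spec L HL) as [Ha HFa]. set (a := decr_inv L) in *.
  unfold continuity_pt, continue_in, limit1_in, limit_in. intros eps Heps.
  set (e := Rmin eps (Rmin (a / 2) ((b - a) / 2))).
  assert (He : 0 < e) by (repeat apply Rmin_pos; lra).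
  assert (He1 : e <= eps) by apply Rmin_l.
  assert (He2 : e <= a / 2) by (eapply Rle_trans; [apply Rmin_r | apply Rmin_l]).
  assert (He3 : e <= (b - a) / 2) by (eapply Rle_trans; [apply Rmin_r | apply Rmin_r]).
  pose proof (deriv_neg_decr (a - e) a ltac:(lra) ltac:(lra) ltac:(lra)).
  pose proof (deriv_neg_decr a (a + e) ltac:(lra) ltac:(lra) ltac:(lra)).
  set (delta := Rmin (L - F c) (Rmin (F (a - e) - L) (L - F (a + e)))).
  assert (Hdelta : 0 < delta) by (repeat apply Rmin_pos; lra).
  exists delta. split; [exact Hdelta|]. intros x [_ Hx]. simpl in Hx |- *. unfold R_dist in *.
  assert (delta <= L - F c) by apply Rmin_l.
  assert (delta <= F (a - e) - L) by (eapply Rle_trans; [apply Rmin_r | apply Rmin_l]).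
  assert (delta <= L - F (a + e)) by (eapply Rle_trans; [apply Rmin_r | apply Rmin_r]).
  apply Rabs_lt_between in Hx.
  destruct (decr_inv_spec x ltac:(lra)) as [Hx' HFx'].
  assert (decr_inv x < a + e) by (apply (deriv_neg_lt_rev (a + e)); lra).
  assert (a - e < decr_inv x) by (apply (deriv_neg_lt_rev _ (a - e)); lra).
  fold a. apply Rabs_lt_between. lra.
Qed.

Lemma is_derive_decr_inv L : F c < L -> is_derive decr_inv L (1 / dF (decr_inv L)).
Proof.
  (* Stdlib's inverse function theorem is stated for increasing functions: apply it to
     [v |-> F (- v)], whose inverse is [L |-> - decr_inv L]. *)
  intros HL. set (lb := (F c + L) / 2). set (ub := L + 1).
  set (f := fun v => F (- v)). set (g := fun L' => - decr_inv L').
  assert (Hrange : forall L', lb <= L' <= ub -> decr_inv ub <= decr_inv L' <= decr_inv lb).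
  { intros L' HL'. split; apply decr_inv_antitone; unfold lb in *; lra. }
  destruct (decr_inv_spec ub ltac:(unfold ub; lra)) as [Hub _].
  destruct (decr_inv_spec L HL) as [HxL HFL].
  assert (Hf : forall v, g lb <= v <= g ub -> derivable_pt_lim f v (- dF (- v))).
  { intros v Hv. apply is_derive_Reals. unfold f.
    replace (- dF (- v)) with (scal (-1) (dF (- v))) by (unfold scal; simpl; unfold mult; simpl; ring).
    apply (is_derive_comp F (fun v => - v) v); [|auto_derive; auto; ring].
    destruct (decr_inv_spec lb ltac:(unfold lb; lra)) as [Hlb _].
    unfold g in Hv. apply F_deriv. lra. }
  set (Prf := fun v (Hv : g lb <= v <= g ub) => exist (fun l => derivable_pt_lim f v l) _ (Hf v Hv)).
  assert (HgL : g lb <= g L <= g ub) by (unfold g; pose proof (Hrange L ltac:(unfold lb, ub; lra)); lra).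
  assert (Hderiv := derivable_pt_lim_recip_interv f g lb ub L Prf).
  assert (Hdf : derive_pt f (g L) (Prf (g L) HgL) = - dF (decr_inv L)).
  { apply derive_pt_eq_0. unfold g. rewrite <- (Ropp_involutive (decr_inv L)) at 2. apply Hf, HgL. }
  assert (Hcomp : forall L', lb <= L' <= ub -> comp f g L' = id L').
  { intros L' HL'. unfold comp, f, g, id. rewrite Ropp_involutive. apply decr_inv_spec. unfold lb in *. lra. }
  specialize (Hderiv (continuity_pt_opp _ _ (continuity_pt_decr_inv L HL))
                ltac:(unfold lb, ub; lra) ltac:(unfold lb, ub; lra) HgL Hcomp).
  assert (HdF : dF (decr_inv L) < 0) by (apply dF_neg; lra).
  rewrite Hdf in Hderiv. specialize (Hderiv ltac:(lra)).
  apply is_derive_Reals, is_derive_opp in Hderiv.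
  replace (1 / dF (decr_inv L)) with (opp (1 / - dF (decr_inv L))) by (unfold opp; simpl; field; lra).
  eapply is_derive_ext; [|exact Hderiv]. intros t. unfold g, opp; simpl. ring.
Qed.

End DecreasingInverse.

(** * The complete elliptic integral and Gauss's transformation *)

Definition ell_quad (a b t : R) := a ^ 2 * cos t ^ 2 + b ^ 2 * sin t ^ 2.
Definition ell_integrand (a b t : R) := / sqrt (ell_quad a b t).
Definition ell_int (a b : R) := RInt (ell_integrand a b) 0 (PI / 2).

Lemma ell_quad_bounds (a b t : R) : 0 < a -> 0 < b ->
  Rmin a b ^ 2 <= ell_quad a b t <= Rmax a b ^ 2.
Proof.
  intros Ha Hb. unfold ell_quad.
  pose proof (sin2_cos2 t) as Hsc. unfold Rsqr in Hsc.
  assert (0 <= cos t ^ 2 /\ 0 <= sin t ^ 2) as [Hc Hs] by (split; nra).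
  pose proof (Rmin_l a b). pose proof (Rmin_r a b).
  pose proof (Rmax_l a b). pose proof (Rmax_r a b).
  assert (0 < Rmin a b) by (apply Rmin_pos; lra).
  assert (Rmin a b ^ 2 <= a ^ 2 <= Rmax a b ^ 2) by (split; nra).
  assert (Rmin a b ^ 2 <= b ^ 2 <= Rmax a b ^ 2) by (split; nra).
  split; nra.
Qed.

Lemma ell_quad_pos (a b t : R) : 0 < a -> 0 < b -> 0 < ell_quad a b t.
Proof.
  intros Ha Hb. assert (0 < Rmin a b) by (apply Rmin_pos; lra).
  pose proof (ell_quad_bounds a b t Ha Hb). nra.
Qed.

Lemma continuous_ell_integrand (a b t : R) : 0 < a -> 0 < b ->
  continuous (ell_integrand a b) t.
Proof.
  intros Ha Hb. apply (ex_derive_continuous (V := R_NormedModule)).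
  pose proof (ell_quad_pos a b t Ha Hb) as Hq. unfold ell_integrand, ell_quad in *.
  auto_derive. repeat split; auto; try lra. apply Rgt_not_eq, sqrt_lt_R0, Hq.
Qed.

Lemma ex_RInt_ell_integrand (a b x y : R) : 0 < a -> 0 < b ->
  ex_RInt (ell_integrand a b) x y.
Proof.
  intros Ha Hb. apply (ex_RInt_continuous (V := R_CompleteNormedModule)).
  intros t _. apply continuous_ell_integrand; auto.
Qed.

Lemma ell_integrand_bounds (a b t : R) : 0 < a -> 0 < b ->
  / Rmax a b <= ell_integrand a b t <= / Rmin a b.
Proof.
  intros Ha Hb. unfold ell_integrand.
  assert (0 < Rmin a b) by (apply Rmin_pos; lra).
  assert (Rmin a b <= Rmax a b) by (eapply Rle_trans; [apply Rmin_l | apply Rmax_l]).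
  destruct (ell_quad_bounds a b t Ha Hb) as [Hlo Hhi].
  rewrite <- (sqrt_pow2 (Rmin a b)) by lra. rewrite <- (sqrt_pow2 (Rmax a b)) by lra.
  split; apply Rinv_le_contravar; try apply sqrt_le_1_alt; auto;
    apply sqrt_lt_R0; nra.
Qed.

Lemma RInt_ell_integrand_bounds (a b x y : R) : 0 < a -> 0 < b -> x <= y ->
  / Rmax a b * (y - x) <= RInt (ell_integrand a b) x y <= / Rmin a b * (y - x).
Proof.
  intros Ha Hb Hxy. apply RInt_between_const; auto using ex_RInt_ell_integrand.
  intros t _. apply ell_integrand_bounds; auto.
Qed.

Lemma RInt_ell_integrand_nonneg_le (a b x y : R) : 0 < a -> 0 < b -> x <= y ->
  0 <= RInt (ell_integrand a b) x y <= / Rmin a b * (y - x).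
Proof.
  intros Ha Hb Hxy. pose proof (RInt_ell_integrand_bounds a b x y Ha Hb Hxy).
  assert (0 < Rmax a b) by (eapply Rlt_le_trans; [exact Ha | apply Rmax_l]).
  assert (0 <= / Rmax a b * (y - x)) by (apply Rmult_le_pos; [apply Rlt_le, Rinv_0_lt_compat|]; lra).
  lra.
Qed.

Lemma ell_int_bounds (a b : R) : 0 < a -> 0 < b ->
  / Rmax a b * (PI / 2) <= ell_int a b <= / Rmin a b * (PI / 2).
Proof.
  intros Ha Hb. pose proof PI_RGT_0. replace (PI / 2) with (PI / 2 - 0) by ring.
  apply RInt_ell_integrand_bounds; auto; lra.
Qed.

Lemma ell_int_pos (a b : R) : 0 < a -> 0 < b -> 0 < ell_int a b.
Proof.
  intros Ha Hb. pose proof PI_RGT_0.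
  assert (0 < Rmax a b) by (eapply Rlt_le_trans; [exact Ha | apply Rmax_l]).
  pose proof (ell_int_bounds a b Ha Hb) as [Hlo _].
  eapply Rlt_le_trans; [|exact Hlo]. apply Rmult_lt_0_compat; [apply Rinv_0_lt_compat|]; lra.
Qed.

Lemma RInt_ell_integrand_Chasles (a b x y z : R) : 0 < a -> 0 < b ->
  RInt (ell_integrand a b) x y + RInt (ell_integrand a b) y z = RInt (ell_integrand a b) x z.
Proof.
  intros Ha Hb. apply (RInt_Chasles (V := R_CompleteNormedModule)); apply ex_RInt_ell_integrand; auto.
Qed.

Lemma RInt_ell_integrand_neg_half (a b : R) : 0 < a -> 0 < b ->
  RInt (ell_integrand a b) (- (PI / 2)) 0 = ell_int a b.
Proof.
  intros Ha Hb.
  assert (Heven : forall t, ell_integrand a b (- t) = ell_integrand a b t).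
  { intros t. unfold ell_integrand, ell_quad. rewrite cos_neg, sin_neg. do 3 f_equal. ring. }
  assert (H : is_RInt (ell_integrand a b) (- 0) (- - (PI / 2)) (ell_int a b)).
  { rewrite Ropp_0, Ropp_involutive. apply (RInt_correct (V := R_CompleteNormedModule)).
    apply ex_RInt_ell_integrand; auto. }
  apply (is_RInt_comp_opp (V := R_NormedModule)), is_RInt_swap, is_RInt_opp in H.
  rewrite opp_opp in H. apply (is_RInt_unique (V := R_CompleteNormedModule)).
  refine (is_RInt_ext _ _ _ _ _ _ H). intros t _. rewrite opp_opp. apply Heven.
Qed.

Section GaussInvariance.

Variables a b : R.
Hypothesis Ha : 0 < a.
Hypothesis Hb : 0 < b.

Let g := sqrt (a * b).
Let m := (a + b) / 2.

Let g_pos : 0 < g.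
Proof. apply sqrt_lt_R0. nra. Qed.

Let g_sq : g * g = a * b.
Proof. apply sqrt_sqrt. nra. Qed.

Let sin_cos_pos t : 0 < t < PI / 2 -> 0 < sin t /\ 0 < cos t.
Proof. intros Ht. split; [apply sin_gt_0 | apply cos_gt_0]; lra. Qed.

(* Gauss's substitution in Newman's form: with T = tan t, tan (gauss_map t) = (b T^2 - a) / (2 g T),
   which maps (0, PI/2) increasingly onto (-PI/2, PI/2). *)
Definition gauss_tan (t : R) := (b * sin t ^ 2 - a * cos t ^ 2) / (2 * g * sin t * cos t).
Definition gauss_map (t : R) := atan (gauss_tan t).
Definition gauss_den (t : R) := b * sin t ^ 2 + a * cos t ^ 2.
Definition gauss_map_deriv (t : R) := 2 * g / gauss_den t.

Lemma gauss_den_pos t : 0 < gauss_den t.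
Proof.
  unfold gauss_den. pose proof (sin2_cos2 t) as Hsc. unfold Rsqr in Hsc.
  assert (0 <= sin t ^ 2 /\ 0 <= cos t ^ 2) as [Hs Hc] by (split; nra).
  destruct (Rle_lt_dec (sin t ^ 2) 0); nra.
Qed.

Lemma one_plus_gauss_tan_sq t : 0 < t < PI / 2 ->
  1 + gauss_tan t ^ 2 = gauss_den t ^ 2 / (2 * g * sin t * cos t) ^ 2.
Proof.
  intros Ht. destruct (sin_cos_pos t Ht) as [Hs Hc]. pose proof g_pos.
  unfold gauss_tan, gauss_den. field_simplify; [|repeat split; apply Rgt_not_eq; lra ..].
  replace (g ^ 2) with (a * b) by (rewrite <- g_sq; ring).
  field. repeat split; apply Rgt_not_eq; lra.
Qed.

Lemma is_derive_gauss_map t : 0 < t < PI / 2 -> is_derive gauss_map t (gauss_map_deriv t).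
Proof.
  intros Ht. destruct (sin_cos_pos t Ht) as [Hs Hc]. pose proof g_pos. pose proof (gauss_den_pos t).
  assert (Htan : is_derive gauss_tan t (gauss_den t / (2 * g * sin t ^ 2 * cos t ^ 2))).
  { unfold gauss_tan, gauss_den. auto_derive.
    - repeat split; apply Rgt_not_eq; repeat apply Rmult_lt_0_compat; lra.
    - pose proof (sin2_cos2 t) as Hsc. unfold Rsqr in Hsc.
      replace (b * sin t ^ 2 + a * cos t ^ 2) with
        ((b * sin t ^ 2 + a * cos t ^ 2) * (sin t * sin t + cos t * cos t)) by (rewrite Hsc; ring).
      field. repeat split; apply Rgt_not_eq; lra. }
  unfold gauss_map. eapply is_derive_ext; [intros; reflexivity|].
  replace (gauss_map_deriv t) with
    (scal (gauss_den t / (2 * g * sin t ^ 2 * cos t ^ 2)) (/ (1 + (gauss_tan t)²))).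
  { exact (is_derive_comp atan gauss_tan t _ _ (is_derive_atan _) Htan). }
  unfold scal; simpl; unfold mult; simpl. unfold Rsqr.
  replace (gauss_tan t * gauss_tan t) with (gauss_tan t ^ 2) by ring.
  rewrite one_plus_gauss_tan_sq by auto. unfold gauss_map_deriv.
  field. repeat split; apply Rgt_not_eq; lra.
Qed.

Lemma continuous_gauss_map_deriv t : continuous gauss_map_deriv t.
Proof.
  apply (ex_derive_continuous (V := R_NormedModule)).
  pose proof (gauss_den_pos t). unfold gauss_map_deriv, gauss_den in *. auto_derive. lra.
Qed.

Lemma ell_quad_gauss_map t : 0 < t < PI / 2 ->
  ell_quad m g (gauss_map t) = g ^ 2 * ell_quad a b t / gauss_den t ^ 2.
Proof.
  intros Ht. destruct (sin_cos_pos t Ht) as [Hs Hc]. pose proof g_pos. pose proof (gauss_den_pos t).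
  assert (Hw : 0 < 1 + gauss_tan t ^ 2) by (pose proof (pow2_ge_0 (gauss_tan t)); lra).
  unfold ell_quad at 1, gauss_map. rewrite cos_atan, sin_atan. unfold Rsqr.
  replace (gauss_tan t * gauss_tan t) with (gauss_tan t ^ 2) by ring.
  rewrite !pow2_div_sqrt by auto.
  transitivity ((m ^ 2 + g ^ 2 * gauss_tan t ^ 2) / (1 + gauss_tan t ^ 2)); [field; lra|].
  rewrite one_plus_gauss_tan_sq by auto.
  pose proof (sin2_cos2 t) as Hsc. unfold Rsqr in Hsc.
  replace (ell_quad a b t) with (ell_quad a b t * (sin t * sin t + cos t * cos t)) by (rewrite Hsc; ring).
  unfold gauss_tan, gauss_den, ell_quad, m in *. field_simplify; [|repeat split; apply Rgt_not_eq; lra ..].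
  replace (g ^ 2) with (a * b) by (rewrite <- g_sq; ring). field. nra.
Qed.

Lemma gauss_map_jacobian t : 0 < t < PI / 2 ->
  gauss_map_deriv t * ell_integrand m g (gauss_map t) = 2 * ell_integrand a b t.
Proof.
  intros Ht. pose proof g_pos. pose proof (gauss_den_pos t).
  pose proof (ell_quad_pos a b t Ha Hb) as Hq. pose proof (sqrt_lt_R0 _ Hq).
  unfold ell_integrand. rewrite ell_quad_gauss_map by auto.
  replace (g ^ 2 * ell_quad a b t / gauss_den t ^ 2)
    with ((g * sqrt (ell_quad a b t) / gauss_den t) ^ 2)
    by (unfold Rdiv; rewrite !Rpow_mult_distr, pow2_sqrt, pow_inv by lra; ring).
  rewrite sqrt_pow2 by (apply Rlt_le, Rdiv_lt_0_compat; [apply Rmult_lt_0_compat|]; lra).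
  unfold gauss_map_deriv. field. repeat split; apply Rgt_not_eq; lra.
Qed.

Lemma RInt_gauss_map t1 t2 : 0 < t1 -> t1 <= t2 -> t2 < PI / 2 ->
  RInt (ell_integrand m g) (gauss_map t1) (gauss_map t2) = 2 * RInt (ell_integrand a b) t1 t2.
Proof.
  intros H1 H12 H2. pose proof g_pos.
  assert (Hm : 0 < m) by (unfold m; lra).
  assert (Hsubst := is_RInt_comp (V := R_CompleteNormedModule)
                      (ell_integrand m g) gauss_map gauss_map_deriv t1 t2).
  rewrite Rmin_left, Rmax_right in Hsubst by lra.
  apply (is_RInt_unique (V := R_CompleteNormedModule)) in Hsubst.
  2: { intros. apply continuous_ell_integrand; auto. }
  2: { intros. split; [apply is_derive_gauss_map; lra | apply continuous_gauss_map_deriv]. }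
  rewrite <- Hsubst.
  change (2 * RInt (ell_integrand a b) t1 t2) with (scal 2 (RInt (ell_integrand a b) t1 t2)).
  rewrite <- (RInt_scal (V := R_CompleteNormedModule)) by (apply ex_RInt_ell_integrand; auto).
  apply RInt_ext. rewrite Rmin_left, Rmax_right by lra. intros x Hx.
  apply gauss_map_jacobian. lra.
Qed.

Lemma gauss_tan_atan T : 0 < T -> gauss_tan (atan T) = (b * T ^ 2 - a) / (2 * g * T).
Proof.
  intros HT. pose proof g_pos. unfold gauss_tan. rewrite cos_atan, sin_atan.
  assert (Hw : 0 < 1 + T²) by (unfold Rsqr; nra).
  pose proof (sqrt_lt_R0 _ Hw). rewrite !pow2_div_sqrt by auto.
  field_simplify; [|repeat split; apply Rgt_not_eq; lra ..].
  rewrite pow2_sqrt by lra. field. unfold Rsqr. repeat split; try lra.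
  replace (2 * T * (T * T) * g + 2 * T * g) with (2 * (T * g) * (T * T + 1)) by ring.
  apply Rgt_not_eq. assert (0 < T * g) by nra. nra.
Qed.

Lemma gauss_map_near_0 eps : 0 < eps < PI / 4 ->
  exists t, 0 < t < eps /\ gauss_map t <= - (PI / 2) + eps.
Proof.
  intros Heps. pose proof PI_RGT_0. pose proof g_pos.
  assert (Htan : 0 < tan eps) by (apply tan_gt_0; lra).
  set (K := / tan eps).
  assert (HK : 0 < K) by (apply Rinv_0_lt_compat, Htan).
  assert (HatK : atan (- K) = - (PI / 2) + eps)
    by (unfold K; rewrite atan_opp, atan_inv, atan_tan by lra; ring).
  set (T := Rmin (tan eps / 2) (a / (a + b + 2 * g * K))).
  assert (HT : 0 < T) by (apply Rmin_pos; apply Rdiv_lt_0_compat; nra).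
  assert (HTeps : T < tan eps) by (eapply Rle_lt_trans; [apply Rmin_l | lra]).
  assert (HTa : (a + b + 2 * g * K) * T <= a).
  { apply (Rmult_le_reg_r (/ (a + b + 2 * g * K))); [apply Rinv_0_lt_compat; nra|].
    rewrite Rmult_comm, <- Rmult_assoc, Rinv_l, Rmult_1_l by nra. apply Rmin_r. }
  assert (HT1 : T <= 1) by (assert (0 <= (b + 2 * g * K) * T) by (apply Rmult_le_pos; nra); nra).
  assert (HbT : b * T ^ 2 <= b * T).
  { replace (b * T ^ 2) with (b * T * T) by ring.
    rewrite <- (Rmult_1_r (b * T)) at 2. apply Rmult_le_compat_l; nra. }
  exists (atan T). split; [split|].
  - rewrite <- atan_0. apply atan_increasing, HT.
  - rewrite <- (atan_tan eps) by lra. apply atan_increasing, HTeps.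
  - unfold gauss_map. rewrite gauss_tan_atan, <- HatK by lra.
    apply Rlt_le, atan_increasing, (Rmult_lt_reg_r (2 * g * T)); [nra|].
    replace ((b * T ^ 2 - a) / (2 * g * T) * (2 * g * T)) with (b * T ^ 2 - a) by (field; nra).
    assert (0 < a * T) by nra. nra.
Qed.

Lemma gauss_map_near_PI2 eps : 0 < eps < PI / 4 ->
  exists t, PI / 2 - eps < t < PI / 2 /\ PI / 2 - eps <= gauss_map t.
Proof.
  intros Heps. pose proof PI_RGT_0. pose proof g_pos.
  assert (Htan : 0 < tan eps) by (apply tan_gt_0; lra).
  set (K := / tan eps).
  assert (HK : 0 < K) by (apply Rinv_0_lt_compat, Htan).
  assert (HatK : atan K = PI / 2 - eps) by (unfold K; rewrite atan_inv, atan_tan by lra; ring).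
  set (T := K + 1 + (2 * g * K + a) / b).
  assert (HbT : 2 * g * K + a + b * (K + 1) = b * T) by (unfold T; field; lra).
  assert (HT : K + 1 <= T) by (unfold T; pose proof (Rdiv_lt_0_compat (2 * g * K + a) b); nra).
  exists (atan T). pose proof (atan_bound T). split; [split|].
  - rewrite <- HatK. apply atan_increasing. lra.
  - lra.
  - unfold gauss_map. rewrite gauss_tan_atan, <- HatK by lra.
    apply Rlt_le, atan_increasing, (Rmult_lt_reg_r (2 * g * T)); [nra|].
    replace ((b * T ^ 2 - a) / (2 * g * T) * (2 * g * T)) with (b * T ^ 2 - a) by (field; nra).
    assert (HbT2 : (2 * g * K + a + b) * T <= b * T * T) by (apply Rmult_le_compat_r; nra).
    nra.
Qed.

Theorem ell_int_gauss_step : ell_int a b = ell_int m g.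
Proof.
  pose proof g_pos as Hg. assert (Hm : 0 < m) by (unfold m; lra). pose proof PI_RGT_0.
  set (K1 := / Rmin a b). set (K2 := / Rmin m g).
  assert (HK1 : 0 < K1) by (apply Rinv_0_lt_compat, Rmin_pos; lra).
  assert (HK2 : 0 < K2) by (apply Rinv_0_lt_compat, Rmin_pos; lra).
  (* [gauss_map] is only a substitution on compact subintervals of (0, PI/2): compare the integrals
     over [t1, t2] exactly and bound the four end pieces by their lengths. *)
  enough (2 * ell_int a b - 2 * ell_int m g = 0) by lra.
  apply (eq_0_of_abs_le_eps _ (4 * K1 + 2 * K2) (PI / 4)); [lra|].
  intros eps Heps.
  destruct (gauss_map_near_0 eps Heps) as (t1 & Ht1 & Hphi1).
  destruct (gauss_map_near_PI2 eps Heps) as (t2 & Ht2 & Hphi2).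
  pose proof (atan_bound (gauss_tan t1)). pose proof (atan_bound (gauss_tan t2)).
  fold (gauss_map t1) (gauss_map t2) in *.
  assert (Hab : ell_int a b = RInt (ell_integrand a b) 0 t1 + RInt (ell_integrand a b) t1 t2
                              + RInt (ell_integrand a b) t2 (PI / 2)).
  { unfold ell_int. rewrite !RInt_ell_integrand_Chasles by auto. reflexivity. }
  assert (Hmg : 2 * ell_int m g =
                RInt (ell_integrand m g) (- (PI / 2)) (gauss_map t1)
                + RInt (ell_integrand m g) (gauss_map t1) (gauss_map t2)
                + RInt (ell_integrand m g) (gauss_map t2) (PI / 2)).
  { rewrite !RInt_ell_integrand_Chasles by auto.
    rewrite <- (RInt_ell_integrand_Chasles m g _ 0) by auto.
    rewrite RInt_ell_integrand_neg_half by auto. unfold ell_int. ring. }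
  rewrite Hab, Hmg, RInt_gauss_map by lra.
  pose proof (RInt_ell_integrand_nonneg_le a b 0 t1 Ha Hb ltac:(lra)) as P1.
  pose proof (RInt_ell_integrand_nonneg_le a b t2 (PI / 2) Ha Hb ltac:(lra)) as P2.
  pose proof (RInt_ell_integrand_nonneg_le m g (- (PI / 2)) (gauss_map t1) Hm Hg ltac:(lra)) as P3.
  pose proof (RInt_ell_integrand_nonneg_le m g (gauss_map t2) (PI / 2) Hm Hg ltac:(lra)) as P4.
  fold K1 K2 in P1, P2, P3, P4.
  assert (K1 * (t1 - 0) <= K1 * eps) by (apply Rmult_le_compat_l; lra).
  assert (K1 * (PI / 2 - t2) <= K1 * eps) by (apply Rmult_le_compat_l; lra).
  assert (K2 * (gauss_map t1 - - (PI / 2)) <= K2 * eps) by (apply Rmult_le_compat_l; lra).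
  assert (K2 * (PI / 2 - gauss_map t2) <= K2 * eps) by (apply Rmult_le_compat_l; lra).
  apply Rabs_le. lra.
Qed.

End GaussInvariance.

(** * The arithmetic-geometric mean *)

Lemma agm_step_gap (x y : R) : 0 < x -> 0 < y ->
  Rabs ((x + y) / 2 - sqrt (x * y)) <= Rabs (x - y) / 2.
Proof.
  intros Hx Hy.
  pose proof (sqrt_lt_R0 x Hx). pose proof (sqrt_lt_R0 y Hy).
  pose proof (sqrt_sqrt x (Rlt_le _ _ Hx)) as Hxx. pose proof (sqrt_sqrt y (Rlt_le _ _ Hy)) as Hyy.
  rewrite sqrt_mult by lra.
  set (u := sqrt x) in *. set (v := sqrt y) in *. rewrite <- Hxx, <- Hyy.
  replace ((u * u + v * v) / 2 - u * v) with ((u - v) ^ 2 / 2) by field.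
  replace (u * u - v * v) with ((u - v) * (u + v)) by ring.
  rewrite Rabs_pos_eq by (pose proof (pow2_ge_0 (u - v)); lra).
  rewrite Rabs_mult, (Rabs_pos_eq (u + v)) by lra.
  assert (Rabs (u - v) <= u + v) by (apply Rabs_le; lra).
  pose proof (Rabs_pos (u - v)). rewrite <- (pow2_abs (u - v)). nra.
Qed.

Lemma agm_seq_pos_gap (a b : R) (n : nat) : 0 < a -> 0 < b ->
  0 < fst (agm_seq a b n) /\ 0 < snd (agm_seq a b n) /\
  Rabs (fst (agm_seq a b n) - snd (agm_seq a b n)) <= Rabs (a - b) * (/ 2) ^ n.
Proof.
  intros Ha Hb. induction n as [|n IH]; simpl; [lra|].
  destruct (agm_seq a b n) as [x y]; simpl in *. destruct IH as (Hx & Hy & Hgap).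
  split; [lra|]. split; [apply sqrt_lt_R0; nra|].
  eapply Rle_trans; [apply agm_step_gap; auto | lra].
Qed.

Lemma ell_int_agm_seq (a b : R) (n : nat) : 0 < a -> 0 < b ->
  ell_int (fst (agm_seq a b n)) (snd (agm_seq a b n)) = ell_int a b.
Proof.
  intros Ha Hb. induction n as [|n IH]; [reflexivity|].
  destruct (agm_seq_pos_gap a b n Ha Hb) as (Hx & Hy & _).
  simpl. rewrite <- ell_int_gauss_step; auto.
Qed.

Lemma ell_int_mean_between (x y : R) : 0 < x -> 0 < y ->
  Rmin x y <= PI / (2 * ell_int x y) <= Rmax x y.
Proof.
  intros Hx Hy. pose proof PI_RGT_0. pose proof (ell_int_pos x y Hx Hy).
  assert (0 < Rmin x y) by (apply Rmin_pos; lra).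
  assert (0 < Rmax x y) by (eapply Rlt_le_trans; [exact Hx | apply Rmax_l]).
  destruct (ell_int_bounds x y Hx Hy) as [Hlo Hhi].
  split.
  - apply (Rmult_le_reg_r (2 * ell_int x y)); [lra|].
    replace (PI / (2 * ell_int x y) * (2 * ell_int x y)) with PI by (field; lra).
    apply (Rmult_le_reg_l (/ Rmin x y)); [apply Rinv_0_lt_compat; lra|].
    replace (/ Rmin x y * (Rmin x y * (2 * ell_int x y))) with (2 * ell_int x y) by (field; lra).
    lra.
  - apply (Rmult_le_reg_r (2 * ell_int x y)); [lra|].
    replace (PI / (2 * ell_int x y) * (2 * ell_int x y)) with PI by (field; lra).
    apply (Rmult_le_reg_l (/ Rmax x y)); [apply Rinv_0_lt_compat; lra|].
    replace (/ Rmax x y * (Rmax x y * (2 * ell_int x y))) with (2 * ell_int x y) by (field; lra).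
    lra.
Qed.

Theorem AGM_ell_int (a b : R) : 0 < a -> 0 < b -> AGM a b = PI / (2 * ell_int a b).
Proof.
  intros Ha Hb. set (c := PI / (2 * ell_int a b)).
  assert (Hclose : forall n, Rabs (fst (agm_seq a b n) - c) <= Rabs (a - b) * (/ 2) ^ n).
  { intros n. destruct (agm_seq_pos_gap a b n Ha Hb) as (Hx & Hy & Hgap).
    pose proof (ell_int_mean_between _ _ Hx Hy) as Hc.
    rewrite ell_int_agm_seq in Hc by auto. fold c in Hc.
    eapply Rle_trans; [|exact Hgap].
    set (x := fst (agm_seq a b n)) in *. set (y := snd (agm_seq a b n)) in *.
    unfold Rmin, Rmax in Hc. destruct (Rle_dec x y).
    - rewrite (Rabs_left1 (x - c)), (Rabs_left1 (x - y)); lra.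
    - rewrite (Rabs_pos_eq (x - c)), (Rabs_pos_eq (x - y)); lra. }
  assert (Hlim : is_lim_seq (fun n => fst (agm_seq a b n)) c).
  { apply (is_lim_seq_le_le (fun n => c - Rabs (a - b) * (/ 2) ^ n) _
                            (fun n => c + Rabs (a - b) * (/ 2) ^ n)).
    - intros n. specialize (Hclose n). apply Rabs_le_between' in Hclose. lra.
    - replace (Finite c) with (Finite (c - Rabs (a - b) * 0)) by (f_equal; ring).
      apply is_lim_seq_minus'; [apply is_lim_seq_const|].
      apply (is_lim_seq_scal_l _ _ 0), is_lim_seq_geom. rewrite Rabs_pos_eq; lra.
    - replace (Finite c) with (Finite (c + Rabs (a - b) * 0)) by (f_equal; ring).
      apply is_lim_seq_plus'; [apply is_lim_seq_const|].
      apply (is_lim_seq_scal_l _ _ 0), is_lim_seq_geom. rewrite Rabs_pos_eq; lra. }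
  unfold AGM. rewrite (is_lim_seq_unique _ _ Hlim). reflexivity.
Qed.

(** * [L_alpha] as an integral, and its derivative *)

(* [ell_quad al b_al] with [b_al = sqrt (1 + 2 al^2) / 2], written without the square root so that it
   is polynomial in [al]. *)
Definition L_quad (al t : R) := al ^ 2 * cos t ^ 2 + (1 + 2 * al ^ 2) / 4 * sin t ^ 2.
Definition L_fun (al : R) := 2 * RInt (fun t => / sqrt (L_quad al t)) 0 (PI / 2).

Lemma L_quad_ell_quad (al t : R) : L_quad al t = ell_quad al (sqrt (1 + 2 * al ^ 2) / 2) t.
Proof.
  unfold L_quad, ell_quad. unfold Rdiv. rewrite Rpow_mult_distr, pow2_sqrt by nra. field.
Qed.

Lemma L_quad_pos (al t : R) : 0 < al -> 0 < L_quad al t.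
Proof.
  intros Hal. rewrite L_quad_ell_quad. apply ell_quad_pos; auto.
  assert (0 < sqrt (1 + 2 * al ^ 2)) by (apply sqrt_lt_R0; nra). lra.
Qed.

Lemma L_alpha_L_fun (al : R) : 0 < al -> L_alpha al = L_fun al.
Proof.
  intros Hal. pose proof PI_RGT_0.
  assert (Hb : 0 < sqrt (1 + 2 * al ^ 2) / 2).
  { assert (0 < sqrt (1 + 2 * al ^ 2)) by (apply sqrt_lt_R0; nra). lra. }
  pose proof (ell_int_pos _ _ Hal Hb).
  unfold L_alpha, L_fun. rewrite AGM_ell_int by auto.
  replace (RInt (fun t => / sqrt (L_quad al t)) 0 (PI / 2))
    with (ell_int al (sqrt (1 + 2 * al ^ 2) / 2))
    by (apply RInt_ext; intros; unfold ell_integrand; rewrite L_quad_ell_quad; reflexivity).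
  field. lra.
Qed.

Lemma continuous_L_integrand (al t : R) : 0 < al -> continuous (fun t => / sqrt (L_quad al t)) t.
Proof.
  intros Hal. apply (ex_derive_continuous (V := R_NormedModule)).
  pose proof (L_quad_pos al t Hal) as Hq. unfold L_quad in *.
  auto_derive. repeat split; auto; try lra. apply Rgt_not_eq, sqrt_lt_R0, Hq.
Qed.

Definition dL_integrand (al t : R) :=
  - al * (1 + cos t ^ 2) / (2 * L_quad al t * sqrt (L_quad al t)).
Definition dL_fun (al : R) := 2 * RInt (dL_integrand al) 0 (PI / 2).

Lemma is_derive_L_integrand (al t : R) : 0 < al ->
  is_derive (fun u => / sqrt (L_quad u t)) al (dL_integrand al t).
Proof.
  intros Hal. unfold dL_integrand.
  replace (- al * (1 + cos t ^ 2)) with (- (al * (1 + cos t ^ 2))) by ring.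
  apply (is_derive_inv_sqrt (fun u => L_quad u t)); [|apply L_quad_pos, Hal].
  pose proof (sin2_cos2 t) as Hsc. unfold Rsqr in Hsc.
  unfold L_quad. auto_derive; auto.
  replace (al * (1 + cos t ^ 2)) with (al * (sin t * sin t + cos t * cos t + cos t ^ 2))
    by (rewrite Hsc; ring).
  field.
Qed.

Lemma continuity_2d_pt_L_quad (x y : R) : continuity_2d_pt L_quad x y.
Proof.
  unfold L_quad.
  apply (continuity_2d_pt_plus (fun u v => u ^ 2 * cos v ^ 2) (fun u v => (1 + 2 * u ^ 2) / 4 * sin v ^ 2)).
  - apply (continuity_2d_pt_mult (fun u _ => u ^ 2) (fun _ v => cos v ^ 2));
      [apply continuity_2d_pt_fst_comp | apply continuity_2d_pt_snd_comp]; auto_derive; auto.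
  - apply (continuity_2d_pt_mult (fun u _ => (1 + 2 * u ^ 2) / 4) (fun _ v => sin v ^ 2));
      [apply continuity_2d_pt_fst_comp | apply continuity_2d_pt_snd_comp]; auto_derive; auto.
Qed.

Lemma continuity_2d_pt_dL_integrand (x y : R) : 0 < x -> continuity_2d_pt dL_integrand x y.
Proof.
  intros Hx. pose proof (L_quad_pos x y Hx) as Hq.
  apply (continuity_2d_pt_ext (fun u v => - u * (1 + cos v ^ 2) * (fun e => / (2 * e * sqrt e)) (L_quad u v))).
  { intros u v. unfold dL_integrand. reflexivity. }
  apply (continuity_2d_pt_mult (fun u v => - u * (1 + cos v ^ 2))).
  - apply (continuity_2d_pt_mult (fun u _ => - u) (fun _ v => 1 + cos v ^ 2));
      [apply continuity_2d_pt_fst_comp | apply continuity_2d_pt_snd_comp]; auto_derive; auto.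
  - apply (continuity_1d_2d_pt_comp (fun e => / (2 * e * sqrt e)) L_quad);
      [|apply continuity_2d_pt_L_quad].
    apply continuity_pt_ex_derive. pose proof (sqrt_lt_R0 _ Hq). auto_derive. repeat split; try lra.
    apply Rgt_not_eq. nra.
Qed.

Lemma ex_RInt_L_integrand (al x y : R) : 0 < al -> ex_RInt (fun t => / sqrt (L_quad al t)) x y.
Proof.
  intros Hal. apply (ex_RInt_continuous (V := R_CompleteNormedModule)).
  intros t _. apply continuous_L_integrand, Hal.
Qed.

Lemma is_derive_L_fun (al : R) : 0 < al -> is_derive L_fun al (dL_fun al).
Proof.
  intros Hal. unfold L_fun, dL_fun. apply is_derive_scal.
  rewrite (RInt_ext _ (fun t => Derive (fun u => / sqrt (L_quad u t)) al))
    by (intros; symmetry; apply is_derive_unique, is_derive_L_integrand, Hal).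
  apply (is_derive_RInt_param (fun u t => / sqrt (L_quad u t))).
  - apply (filter_imp (fun u => 0 < u)); [|exact (open_gt 0 al Hal)].
    intros u Hu t _. eexists. apply is_derive_L_integrand, Hu.
  - intros t _. apply (continuity_2d_pt_ext_loc dL_integrand).
    + assert (Hd : 0 < al / 2) by lra. exists (mkposreal _ Hd). simpl. intros u v Hu _.
      apply Rabs_lt_between in Hu. symmetry. apply is_derive_unique, is_derive_L_integrand. lra.
    + apply continuity_2d_pt_dL_integrand, Hal.
  - apply (filter_imp (fun u => 0 < u)); [|exact (open_gt 0 al Hal)].
    intros u Hu. apply ex_RInt_L_integrand, Hu.
Qed.

(* [dL_primitive] is the part of [- 2 al * dL_integrand] that integrates in closed form; the rest is
   O(al) by [L_defect_bounds]. *)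
Definition L_primitive (al t : R) := sin t / sqrt (L_quad al t).
Definition dL_primitive (al t : R) := al ^ 2 * cos t / (L_quad al t * sqrt (L_quad al t)).

Lemma is_derive_L_primitive (al t : R) : 0 < al -> is_derive (L_primitive al) t (dL_primitive al t).
Proof.
  intros Hal. pose proof (L_quad_pos al t Hal) as Hq.
  pose proof (sqrt_lt_R0 _ Hq). pose proof (sin2_cos2 t) as Hsc. unfold Rsqr in Hsc.
  assert (HdE : is_derive (L_quad al) t (sin t * cos t * (1 - 2 * al ^ 2) / 2))
    by (unfold L_quad; auto_derive; auto; field).
  assert (Hprod := is_derive_mult sin (fun u => / sqrt (L_quad al u)) t _ _
                     (is_derive_sin t) (is_derive_inv_sqrt _ _ _ HdE Hq) Rmult_comm).
  apply (is_derive_ext (fun u => mult (sin u) (/ sqrt (L_quad al u)))); [reflexivity|].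
  replace (dL_primitive al t) with (plus (mult (cos t) (/ sqrt (L_quad al t)))
    (mult (sin t) (- (sin t * cos t * (1 - 2 * al ^ 2) / 2) / (2 * L_quad al t * sqrt (L_quad al t)))));
    [exact Hprod|].
  unfold plus, mult; simpl. unfold dL_primitive.
  replace (al ^ 2 * cos t) with (al ^ 2 * cos t * (sin t * sin t + cos t * cos t)) by (rewrite Hsc; ring).
  set (r := sqrt (L_quad al t)) in *. unfold L_quad in *. field. split; lra.
Qed.

Lemma continuous_dL_primitive (al t : R) : 0 < al -> continuous (dL_primitive al) t.
Proof.
  intros Hal. pose proof (L_quad_pos al t Hal) as Hq.
  apply (continuous_mult (fun u => al ^ 2 * cos u) (fun u => / (L_quad al u * sqrt (L_quad al u)))).
  - apply (ex_derive_continuous (V := R_NormedModule)). auto_derive. auto.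
  - apply (continuous_comp (L_quad al) (fun e => / (e * sqrt e))).
    + apply (ex_derive_continuous (V := R_NormedModule)). unfold L_quad. auto_derive. auto.
    + apply (ex_derive_continuous (V := R_NormedModule)). pose proof (sqrt_lt_R0 _ Hq).
      auto_derive. repeat split; try lra. apply Rgt_not_eq. nra.
Qed.

Lemma RInt_dL_primitive (al : R) : 0 < al ->
  RInt (dL_primitive al) 0 (PI / 2) = 2 / sqrt (1 + 2 * al ^ 2).
Proof.
  intros Hal. apply (is_RInt_unique (V := R_CompleteNormedModule)).
  replace (2 / sqrt (1 + 2 * al ^ 2)) with (minus (L_primitive al (PI / 2)) (L_primitive al 0)).
  { apply (is_RInt_derive (V := R_CompleteNormedModule)); intros t _; [apply is_derive_L_primitive | apply continuous_dL_primitive]; auto. }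
  assert (Hs : 0 < sqrt (1 + 2 * al ^ 2)) by (apply sqrt_lt_R0; nra).
  assert (HE : L_quad al (PI / 2) = (sqrt (1 + 2 * al ^ 2) / 2) ^ 2).
  { unfold L_quad. rewrite sin_PI2, cos_PI2. unfold Rdiv. rewrite Rpow_mult_distr, pow2_sqrt by nra. field. }
  unfold minus, plus, opp; simpl. unfold L_primitive.
  rewrite HE, sqrt_pow2, sin_PI2, sin_0 by lra.
  replace (0 / sqrt (L_quad al 0)) with 0 by (unfold Rdiv; ring).
  replace (al * (al * 1)) with (al ^ 2) by ring. field. lra.
Qed.

Lemma L_defect_bounds (al t : R) : 0 < al <= 1 / 2 -> 0 < t < PI / 2 ->
  0 <= -2 * al * dL_integrand al t - 2 * dL_primitive al t <= 4 * al.
Proof.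
  intros Hal Ht.
  assert (Hs : 0 < sin t) by (apply sin_gt_0; lra).
  assert (Hc : 0 < cos t) by (apply cos_gt_0; lra).
  pose proof (sin2_cos2 t) as Hsc. unfold Rsqr in Hsc.
  pose proof (L_quad_pos al t ltac:(lra)) as Hq. pose proof (sqrt_lt_R0 _ Hq) as Hr.
  pose proof (sqrt_sqrt _ (Rlt_le _ _ Hq)) as Hrr.
  assert (Hdefect : -2 * al * dL_integrand al t - 2 * dL_primitive al t
                    = al ^ 2 * (1 - cos t) ^ 2 / (L_quad al t * sqrt (L_quad al t))).
  { unfold dL_integrand, dL_primitive. field. split; lra. }
  rewrite Hdefect. clear Hdefect.
  assert (HEs : sin t ^ 2 / 4 <= L_quad al t) by (unfold L_quad; nra).
  assert (HEa : al ^ 2 <= L_quad al t).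
  { unfold L_quad. replace (al ^ 2) with (al ^ 2 * (sin t * sin t + cos t * cos t)) at 1 by (rewrite Hsc; ring).
    assert (0 <= sin t ^ 2 * (1 - 2 * al ^ 2)) by (apply Rmult_le_pos; nra). lra. }
  set (E := L_quad al t) in *. set (r := sqrt E) in *. clearbody E r.
  assert (Hra : al <= r) by nra.
  assert (Hcs : (1 - cos t) ^ 2 <= sin t ^ 2).
  { assert (Hc1 : cos t <= 1) by nra.
    replace (sin t ^ 2) with ((1 - cos t) * (1 + cos t)) by (simpl; lra).
    simpl. apply Rmult_le_compat_l; lra. }
  split.
  - apply Rdiv_le_0_compat; [apply Rmult_le_pos; apply pow2_ge_0 | apply Rmult_lt_0_compat; lra].
  - apply (Rmult_le_reg_r (E * r)); [apply Rmult_lt_0_compat; lra|].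
    replace (al ^ 2 * (1 - cos t) ^ 2 / (E * r) * (E * r)) with (al ^ 2 * (1 - cos t) ^ 2)
      by (field; split; lra).
    assert (al ^ 2 * (1 - cos t) ^ 2 <= al ^ 2 * sin t ^ 2) by (apply Rmult_le_compat_l; nra).
    assert (sin t ^ 2 / 4 * al <= E * r) by (apply Rmult_le_compat; nra).
    nra.
Qed.

Lemma alpha_dL_fun_bounds (al : R) : 0 < al <= 1 / 2 ->
  4 / sqrt (1 + 2 * al ^ 2) <= - al * dL_fun al <= 4 / sqrt (1 + 2 * al ^ 2) + 2 * PI * al.
Proof.
  intros Hal. pose proof PI_RGT_0.
  assert (HdL : ex_RInt (dL_integrand al) 0 (PI / 2)).
  { apply (ex_RInt_continuous (V := R_CompleteNormedModule)). intros t _.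
    apply continuous_of_continuity_2d_pt, continuity_2d_pt_dL_integrand. lra. }
  assert (HdP : ex_RInt (dL_primitive al) 0 (PI / 2)).
  { apply (ex_RInt_continuous (V := R_CompleteNormedModule)). intros t _.
    apply continuous_dL_primitive. lra. }
  set (X := fun t => -2 * al * dL_integrand al t - 2 * dL_primitive al t).
  assert (HX : is_RInt X 0 (PI / 2)
                 (-2 * al * RInt (dL_integrand al) 0 (PI / 2) - 2 * RInt (dL_primitive al) 0 (PI / 2))).
  { apply (is_RInt_minus (V := R_NormedModule)); apply (is_RInt_scal (V := R_NormedModule));
      apply (RInt_correct (V := R_CompleteNormedModule)); assumption. }
  assert (Hbounds : 0 * (PI / 2 - 0) <= RInt X 0 (PI / 2) <= 4 * al * (PI / 2 - 0)).
  { apply RInt_between_const; [lra | eexists; exact HX |].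
    intros t Ht. apply L_defect_bounds; lra. }
  rewrite (is_RInt_unique (V := R_CompleteNormedModule) _ _ _ _ HX), RInt_dL_primitive in Hbounds by lra.
  unfold dL_fun. lra.
Qed.

Lemma dL_fun_neg (al : R) : 0 < al <= 1 / 2 -> dL_fun al < 0.
Proof.
  intros Hal. destruct (alpha_dL_fun_bounds al Hal) as [Hlo _].
  assert (0 < 4 / sqrt (1 + 2 * al ^ 2)) by (apply Rdiv_lt_0_compat; [lra | apply sqrt_lt_R0; nra]).
  nra.
Qed.

Lemma L_fun_log_growth (x y : R) : 0 < x -> x < y -> y < 1 / 2 ->
  L_fun y + 2 * ln y - 2 * ln x < L_fun x.
Proof.
  intros Hx Hxy Hy. enough (- (L_fun x + 2 * ln x) < - (L_fun y + 2 * ln y)) by lra.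
  apply (incr_function (fun a => - (L_fun a + 2 * ln a)) 0 (1 / 2) (fun a => - (dL_fun a + 2 / a)));
    simpl; auto; intros a Ha0 Ha1.
  - apply (is_derive_opp (fun a => L_fun a + 2 * ln a)).
    apply (is_derive_plus L_fun (fun a => 2 * ln a)); [apply is_derive_L_fun; lra|].
    auto_derive; [lra | field; lra].
  - destruct (alpha_dL_fun_bounds a ltac:(lra)) as [Hlo _].
    assert (Hs : sqrt (1 + 2 * a ^ 2) < sqrt (2 ^ 2)) by (apply sqrt_lt_1_alt; nra).
    rewrite sqrt_pow2 in Hs by lra.
    assert (2 < 4 / sqrt (1 + 2 * a ^ 2)).
    { pose proof (sqrt_lt_R0 (1 + 2 * a ^ 2) ltac:(nra)).
      apply (Rmult_lt_reg_r (sqrt (1 + 2 * a ^ 2))); [lra|]. field_simplify; lra. }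
    replace (- (dL_fun a + 2 / a)) with ((- a * dL_fun a - 2) / a) by (field; lra).
    apply Rdiv_lt_0_compat; lra.
Qed.

Lemma L_fun_unbounded (M : R) : exists x, 0 < x < 1 / 2 /\ M < L_fun x.
Proof.
  set (c := (L_fun (1 / 4) + 2 * ln (1 / 4) - M) / 2).
  set (x := Rmin (1 / 8) (exp c)).
  assert (Hx : 0 < x) by (apply Rmin_pos; [lra | apply exp_pos]).
  assert (Hx8 : x <= 1 / 8) by apply Rmin_l.
  assert (Hlnx : ln x <= c) by (rewrite <- (ln_exp c); apply ln_le; [exact Hx | apply Rmin_r]).
  exists x. split; [lra|].
  pose proof (L_fun_log_growth x (1 / 4) Hx ltac:(lra) ltac:(lra)). unfold c in Hlnx. lra.
Qed.


Definition alpha_of_L (L : R) := decr_inv L_fun (1 / 4) L.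

Lemma alpha_of_L_spec (L : R) : L_fun (1 / 4) < L ->
  0 < alpha_of_L L < 1 / 4 /\ L_fun (alpha_of_L L) = L.
Proof.
  apply (decr_inv_spec L_fun dL_fun (1 / 2) (1 / 4));
    [lra | intros x Hx; apply is_derive_L_fun; lra | intros x Hx; apply dL_fun_neg; lra
    | exact L_fun_unbounded].
Qed.

Lemma is_derive_alpha_of_L (L : R) : L_fun (1 / 4) < L ->
  is_derive alpha_of_L L (1 / dL_fun (alpha_of_L L)).
Proof.
  apply (is_derive_decr_inv L_fun dL_fun (1 / 2) (1 / 4));
    [lra | intros x Hx; apply is_derive_L_fun; lra | intros x Hx; apply dL_fun_neg; lra
    | exact L_fun_unbounded].
Qed.

Lemma alpha_of_L_lt (L d : R) : 0 < d <= 1 / 4 -> L_fun (1 / 4) < L -> L_fun d < L -> alpha_of_L L < d.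
Proof.
  apply (decr_inv_lt L_fun dL_fun (1 / 2) (1 / 4));
    [lra | intros x Hx; apply is_derive_L_fun; lra | intros x Hx; apply dL_fun_neg; lra
    | exact L_fun_unbounded].
Qed.

(** * The initial value y_L(0) as a function of alpha *)

Definition y_init (a : R) := sqrt ((1 - sqrt (1 - 4 * a ^ 4)) / 2).
Definition y_init_deriv (a : R) := 2 * a ^ 3 / (sqrt (1 - 4 * a ^ 4) * y_init a).

Lemma y_init_unique (x0 y0 a : R) : x0 > y0 -> y0 > 0 ->
  x0 ^ 2 + y0 ^ 2 = 1 -> x0 * y0 = a ^ 2 -> y0 = y_init a.
Proof.
  intros Hxy Hy Hsum Hprod.
  assert (Hdisc : sqrt (1 - 4 * a ^ 4) = x0 ^ 2 - y0 ^ 2).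
  { replace (1 - 4 * a ^ 4) with ((x0 ^ 2 + y0 ^ 2) ^ 2 - 4 * (x0 * y0) ^ 2)
      by (rewrite Hsum, Hprod; ring).
    replace ((x0 ^ 2 + y0 ^ 2) ^ 2 - 4 * (x0 * y0) ^ 2) with ((x0 ^ 2 - y0 ^ 2) ^ 2) by ring.
    apply sqrt_pow2. nra. }
  unfold y_init. rewrite Hdisc. replace ((1 - (x0 ^ 2 - y0 ^ 2)) / 2) with (y0 ^ 2) by lra.
  rewrite sqrt_pow2; lra.
Qed.

Lemma y_init_disc_bounds (a : R) : 0 < a <= 1 / 2 ->
  0 < 1 - 4 * a ^ 4 /\ 0 < sqrt (1 - 4 * a ^ 4) < 1 /\ 1 - sqrt (1 - 4 * a ^ 4) <= 4 * a ^ 4.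
Proof.
  intros Ha. assert (H2 : 0 < a ^ 2 <= 1 / 4) by (split; [apply pow_lt; lra | nra]).
  assert (H4 : 0 < a ^ 4 <= 1 / 16) by (replace (a ^ 4) with (a ^ 2 * a ^ 2) by ring; split; nra).
  assert (Hs : 0 < sqrt (1 - 4 * a ^ 4) < 1).
  { split; [apply sqrt_lt_R0; lra|]. rewrite <- sqrt_1 at 2. apply sqrt_lt_1_alt. lra. }
  split; [lra | split; [exact Hs|]].
  pose proof (sqrt_sqrt (1 - 4 * a ^ 4) ltac:(lra)).
  set (S := sqrt (1 - 4 * a ^ 4)) in *. assert (S * S <= S * 1) by (apply Rmult_le_compat_l; lra). lra.
Qed.

Lemma y_init_pos (a : R) : 0 < a <= 1 / 2 -> 0 < y_init a.
Proof. intros Ha. destruct (y_init_disc_bounds a Ha) as (_ & HS & _). apply sqrt_lt_R0. lra. Qed.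

Lemma is_derive_y_init (a : R) : 0 < a <= 1 / 2 -> is_derive y_init a (y_init_deriv a).
Proof.
  intros Ha. destruct (y_init_disc_bounds a Ha) as (Hd & HS & _). pose proof (y_init_pos a Ha) as Hy.
  unfold y_init_deriv. unfold y_init in *. auto_derive;
    replace (1 + - (4 * (a * (a * (a * (a * 1)))))) with (1 - 4 * a ^ 4) by ring;
    replace ((1 + - sqrt (1 - 4 * a ^ 4)) * / 2) with ((1 - sqrt (1 - 4 * a ^ 4)) / 2) by (unfold Rdiv; ring).
  - repeat split; lra.
  - field. split; lra.
Qed.

Lemma alpha_y_init_log_deriv_bounds (a : R) : 0 < a <= 1 / 4 ->
  2 <= a * y_init_deriv a / y_init a <= 2 + a.
Proof.
  intros Ha. destruct (y_init_disc_bounds a ltac:(lra)) as (Hd & HS1 & Hgap).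
  set (S := sqrt (1 - 4 * a ^ 4)) in *.
  assert (HSS : S * S = 1 - 4 * a ^ 4) by (apply sqrt_sqrt; lra).
  assert (Hyy : y_init a * y_init a = (1 - S) / 2) by (unfold y_init; fold S; apply sqrt_sqrt; lra).
  pose proof (y_init_pos a ltac:(lra)) as Hy.
  assert (H2 : 0 <= a ^ 2 <= 1 / 16) by (split; [apply pow2_ge_0 | nra]).
  assert (H3 : 0 <= a ^ 3 <= 1 / 64) by (replace (a ^ 3) with (a * a ^ 2) by ring; split; nra).
  assert (H4 : 0 < a ^ 4 <= a / 64) by (replace (a ^ 4) with (a * a ^ 3) by ring; split; nra).
  assert (HS : 1 / 2 <= S) by lra.
  assert (Hratio : a * y_init_deriv a / y_init a = 1 + 1 / S).
  { (* uses (1 - S) (1 + S) = 4 a^4 *)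
    unfold y_init_deriv. fold S.
    replace (a * (2 * a ^ 3 / (S * y_init a)) / y_init a) with (2 * a ^ 4 / (S * (y_init a * y_init a)))
      by (field; lra).
    rewrite Hyy. apply (Rmult_eq_reg_r (S * (1 - S))); [|nra].
    field_simplify; [|lra ..]. nra. }
  rewrite Hratio. split.
  - apply (Rmult_le_reg_r S); [lra|]. field_simplify; lra.
  - apply (Rmult_le_reg_r S); [lra|]. field_simplify; [|lra]. nra.
Qed.

Lemma alpha_dL_fun_near_4 (a : R) : 0 < a <= 1 / 4 -> 4 - a <= - a * dL_fun a <= 4 + 8 * a.
Proof.
  intros Ha. destruct (alpha_dL_fun_bounds a ltac:(lra)) as [Hlo Hhi]. pose proof PI_4.
  assert (Hs0 : 0 < sqrt (1 + 2 * a ^ 2)) by (apply sqrt_lt_R0; nra).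
  assert (Hs1 : 1 <= sqrt (1 + 2 * a ^ 2)) by (rewrite <- sqrt_1 at 1; apply sqrt_le_1_alt; nra).
  assert (Hs2 : sqrt (1 + 2 * a ^ 2) <= 1 + a ^ 2).
  { rewrite <- (sqrt_pow2 (1 + a ^ 2)) by nra. apply sqrt_le_1_alt. nra. }
  assert (Hup : 4 / sqrt (1 + 2 * a ^ 2) <= 4).
  { apply (Rmult_le_reg_r (sqrt (1 + 2 * a ^ 2))); [lra|]. field_simplify; lra. }
  assert (Hdown : 4 - a <= 4 / sqrt (1 + 2 * a ^ 2)).
  { apply (Rmult_le_reg_r (sqrt (1 + 2 * a ^ 2))); [lra|]. field_simplify; [|lra]. nra. }
  split; nra.
Qed.

Lemma log_deriv_quotient_bound (a P Q : R) : 0 < a <= 1 / 4 ->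
  2 <= P <= 2 + a -> 4 - a <= Q <= 4 + 8 * a -> Rabs (P / (- Q) - - 1 / 2) <= 2 * a.
Proof.
  intros Ha HP HQ.
  replace (P / (- Q) - - 1 / 2) with ((Q - 2 * P) / (2 * Q)) by (field; lra).
  unfold Rdiv. rewrite Rabs_mult, Rabs_inv, (Rabs_pos_eq (2 * Q)) by lra.
  apply (Rmult_le_reg_r (2 * Q)); [lra|].
  rewrite Rmult_assoc, Rinv_l, Rmult_1_r by lra.
  apply Rabs_le. nra.
Qed.

Definition L_threshold := Rmax (PI * sqrt 2) (L_fun (1 / 4)).

Lemma alpha_of_L_admissible (L : R) : L_threshold < L ->
  PI * sqrt 2 < L /\ 0 < alpha_of_L L < / sqrt 2 /\ L_alpha (alpha_of_L L) = L.
Proof.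
  intros HL. pose proof (Rmax_l (PI * sqrt 2) (L_fun (1 / 4))).
  pose proof (Rmax_r (PI * sqrt 2) (L_fun (1 / 4))). fold L_threshold in *.
  destruct (alpha_of_L_spec L ltac:(lra)) as [Ha HLa].
  assert (Hsqrt2 : 1 / 4 < / sqrt 2).
  { assert (sqrt 2 < sqrt (2 ^ 2)) by (apply sqrt_lt_1_alt; lra). rewrite sqrt_pow2 in * by lra.
    pose proof (sqrt_lt_R0 2 ltac:(lra)).
    apply (Rmult_lt_reg_r (sqrt 2)); [lra|]. rewrite Rinv_l by lra. lra. }
  split; [lra | split; [lra|]]. rewrite L_alpha_L_fun; lra.
Qed.

Definition y_of_L (L : R) := y_init (alpha_of_L L).

Lemma is_derive_y_of_L (L : R) : L_fun (1 / 4) < L ->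
  is_derive y_of_L L (y_init_deriv (alpha_of_L L) * (1 / dL_fun (alpha_of_L L))).
Proof.
  intros HL. destruct (alpha_of_L_spec L HL) as [Ha _].
  rewrite Rmult_comm. apply (is_derive_comp y_init alpha_of_L).
  - apply is_derive_y_init. lra.
  - apply is_derive_alpha_of_L, HL.
Qed.

Lemma is_lim_log_deriv_y_of_L : is_lim (fun L => Derive y_of_L L / y_of_L L) p_infty (- 1 / 2).
Proof.
  apply is_lim_spec. intros eps. pose proof (cond_pos eps).
  set (d := Rmin (1 / 4) (eps / 4)).
  assert (Hd : 0 < d <= 1 / 4) by (split; [apply Rmin_pos; lra | apply Rmin_l]).
  assert (Hdeps : d <= eps / 4) by apply Rmin_r.
  exists (Rmax (L_fun (1 / 4)) (L_fun d)). intros L HL.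
  pose proof (Rmax_l (L_fun (1 / 4)) (L_fun d)). pose proof (Rmax_r (L_fun (1 / 4)) (L_fun d)).
  rewrite (is_derive_unique _ _ _ (is_derive_y_of_L L ltac:(lra))).
  pose proof (alpha_of_L_lt L d Hd ltac:(lra) ltac:(lra)).
  destruct (alpha_of_L_spec L ltac:(lra)) as [Ha _].
  unfold y_of_L. set (a := alpha_of_L L) in *.
  pose proof (y_init_pos a ltac:(lra)). pose proof (dL_fun_neg a ltac:(lra)).
  replace (y_init_deriv a * (1 / dL_fun a) / y_init a)
    with ((a * y_init_deriv a / y_init a) / (- (- a * dL_fun a))) by (field; lra).
  eapply Rle_lt_trans; [apply (log_deriv_quotient_bound a) | lra].
  - lra.
  - apply alpha_y_init_log_deriv_bounds. lra.
  - apply alpha_dL_fun_near_4. lra.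
Qed.

Theorem lemma8p4 (x y z : R -> R -> R)
  (Hode : forall L, PI * sqrt 2 < L -> forall t,
      is_derive (x L) t (- (x L t * z L t)) /\
      is_derive (y L) t (y L t * z L t) /\
      is_derive (z L) t (x L t ^ 2 - y L t ^ 2))
  (Hinit : forall L, PI * sqrt 2 < L -> forall alpha,
      0 < alpha < / sqrt 2 -> L_alpha alpha = L ->
      x L 0 > y L 0 /\ y L 0 > 0 /\
      x L 0 ^ 2 + y L 0 ^ 2 = 1 /\ x L 0 * y L 0 = alpha ^ 2 /\
      z L 0 = 0) :
  (Rbar_locally p_infty (fun L => ex_derive (fun L' => y L' 0) L)) /\
  is_lim (fun L => Derive (fun L' => y L' 0) L / y L 0) p_infty (- 1 / 2).
Proof.
  (* Only the initial value y_L(0) enters. *)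
  clear Hode.
  assert (Hy : forall L, L_threshold < L -> y L 0 = y_of_L L).
  { intros L HL. destruct (alpha_of_L_admissible L HL) as (HL' & Ha & HLa).
    destruct (Hinit L HL' _ Ha HLa) as (Hxy & Hy & Hsum & Hprod & _).
    exact (y_init_unique _ _ _ Hxy Hy Hsum Hprod). }
  assert (Hnear : forall L, L_threshold < L -> locally L (fun L' => y_of_L L' = y L' 0)).
  { intros L HL. apply (filter_imp (fun L' => L_threshold < L')); [|exact (open_gt _ L HL)].
    intros L' HL'. symmetry. apply Hy, HL'. }
  pose proof (Rmax_r (PI * sqrt 2) (L_fun (1 / 4))). fold L_threshold in *.
  split.
  - exists L_threshold. intros L HL. apply (ex_derive_ext_loc y_of_L _ _ (Hnear L HL)).
    eexists. apply is_derive_y_of_L. lra.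
  - apply (is_lim_ext_loc (fun L => Derive y_of_L L / y_of_L L)); [|exact is_lim_log_deriv_y_of_L].
    exists L_threshold. intros L HL. rewrite (Derive_ext_loc _ _ _ (Hnear L HL)), Hy by exact HL.
    reflexivity.
Qed.
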